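(* Assume Conditions A, B, C with $k_1=0$ (so $H(q,X)=H(X)$), let $0<T<\infty$, let $\chi:(0,T)\to\mathbb{R}$ be bounded continuous with $\alpha=\sup_{(0,T)}|\chi|$, and let $Z$ be a non-increasing continuous function from (a set containing) $[0,\infty)$ to $[0,\infty)$. Set $M=\max(\Lambda^{\sup},1)$ and $\bar E=2(1+T)M$. Fix $z\in\mathbb{R}^n$, $r=|x-z|$. Then for every $b>0$ the function $w(x,t)=\alpha t+b(1+t)e^{r^2/\bar E}$ is a (classical, hence viscosity) super-solution of $H(D^2w+Z(w)Dw\otimes Dw)+\chi(t)-w_t\le0$ in $\mathbb{R}^n\times(0,T)$.
   Context: $S^{n\times n}$ denotes the real symmetric matrices with the usual order, $I$ the identity, $O$ the zero matrix, $(e\otimes e)_{ij}=e_ie_j$, $(p\otimes q)_{ij}=p_iq_j$. $H:\mathbb{R}^n\times S^{n\times n}\to\mathbb{R}$ is continuous and satisfies: Condition A: $H(q,X)\le H(q,Y)$ when $X\le Y$ and $H(q,O)=0$. Condition B: there is $k_1\ge0$ with $H(\theta q,X)=|\theta|^{k_1}H(q,X)$ for all $\theta\in\mathbb{R}$ and $H(q,\theta X)=\theta H(q,X)$ for $\theta>0$. Condition C: $\max_{|e|=1}H(e,-I)<0<\min_{|e|=1}H(e,I)$ and $\Lambda^{\sup}:=\sup_{\lambda\in\mathbb{R}}\max_{|e|=1}H(e,\lambda e\otimes e+I)<\infty$. *)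

From mathcomp Require Import ssreflect ssrfun ssrbool eqtype ssrnat seq fintype bigop.
From Stdlib Require Import Reals.
Set Implicit Arguments. Unset Strict Implicit.
Open Scope R_scope.

Definition vec (n : nat) := 'I_n -> R.
Definition mat (n : nat) := 'I_n -> 'I_n -> R.

Definition rsum (n : nat) (f : 'I_n -> R) : R := \big[Rplus/0]_(i < n) f i.

Definition sym (n : nat) (X : mat n) : Prop := forall i j, X i j = X j i.
Definition mat_le (n : nat) (X Y : mat n) : Prop :=
  forall xi : vec n, 0 <= rsum (fun i => rsum (fun j => xi i * (Y i j - X i j) * xi j)).
Definition idm (n : nat) : mat n := fun i j => if i == j then 1 else 0.
Definition zerom (n : nat) : mat n := fun _ _ => 0.
Definition outer (n : nat) (p q : vec n) : mat n := fun i j => p i * q j.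
Definition madd (n : nat) (X Y : mat n) : mat n := fun i j => X i j + Y i j.
Definition mscale (n : nat) (a : R) (X : mat n) : mat n := fun i j => a * X i j.
Definition mopp (n : nat) (X : mat n) : mat n := fun i j => - X i j.
Definition vscale (n : nat) (a : R) (q : vec n) : vec n := fun i => a * q i.
Definition vnorm (n : nat) (e : vec n) : R := sqrt (rsum (fun i => e i ^ 2)).
Definition dist2 (n : nat) (x z : vec n) : R := rsum (fun i => (x i - z i) ^ 2).

Definition H_continuous (n : nat) (H : vec n -> mat n -> R) : Prop :=
  forall q X, sym X -> forall eps, 0 < eps -> exists delta, 0 < delta /\
    forall q' X', sym X' -> (forall i, Rabs (q' i - q i) < delta) ->
      (forall i j, Rabs (X' i j - X i j) < delta) -> Rabs (H q' X' - H q X) < eps.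

Definition condA (n : nat) (H : vec n -> mat n -> R) : Prop :=
  (forall q X Y, sym X -> sym Y -> mat_le X Y -> H q X <= H q Y) /\
  (forall q, H q (@zerom n) = 0).

(* Condition B with k1 = 0 (|theta|^0 = 1 for every real theta) *)
Definition condB0 (n : nat) (H : vec n -> mat n -> R) : Prop :=
  (forall theta q X, sym X -> H (vscale theta q) X = H q X) /\
  (forall theta q X, sym X -> 0 < theta -> H q (mscale theta X) = theta * H q X).

Definition is_max (S : R -> Prop) (m : R) : Prop := S m /\ forall y, S y -> y <= m.
Definition is_min (S : R -> Prop) (m : R) : Prop := S m /\ forall y, S y -> m <= y.

Definition unit_vals (n : nat) (H : vec n -> mat n -> R) (F : vec n -> mat n) : R -> Prop :=
  fun y => exists e : vec n, vnorm e = 1 /\ y = H e (F e).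

(* Condition C, with Lsup = Lambda^sup (finite) *)
Definition condC (n : nat) (H : vec n -> mat n -> R) (Lsup : R) : Prop :=
  (exists m, is_max (unit_vals H (fun _ => mopp (@idm n))) m /\ m < 0) /\
  (exists m, is_min (unit_vals H (fun _ => @idm n)) m /\ 0 < m) /\
  is_lub (fun y => exists lam : R,
            is_max (unit_vals H (fun e => madd (mscale lam (outer e e)) (@idm n))) y) Lsup.

Definition upd (n : nat) (x : vec n) (i : 'I_n) (s : R) : vec n :=
  fun j => if j == i then s else x j.
Definition partial_x (n : nat) (f : vec n -> R -> R) (i : 'I_n) (x : vec n) (t l : R) : Prop :=
  derivable_pt_lim (fun s => f (upd x i s) t) (x i) l.
Definition partial_t (n : nat) (f : vec n -> R -> R) (x : vec n) (t l : R) : Prop :=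
  derivable_pt_lim (fun s => f x s) t l.
Definition cont_xt (n : nat) (f : vec n -> R -> R) (x : vec n) (t : R) : Prop :=
  forall eps, 0 < eps -> exists delta, 0 < delta /\
    forall y s, (forall i, Rabs (y i - x i) < delta) -> Rabs (s - t) < delta ->
      Rabs (f y s - f x t) < eps.

Definition classical_supersol (n : nat) (H : vec n -> mat n -> R) (Z chi : R -> R) (T : R)
    (w : vec n -> R -> R) : Prop :=
  exists (Dw : 'I_n -> vec n -> R -> R) (D2w : 'I_n -> 'I_n -> vec n -> R -> R)
         (wt : vec n -> R -> R),
  forall x t, 0 < t < T ->
    (forall i, partial_x w i x t (Dw i x t)) /\
    (forall i j, partial_x (Dw i) j x t (D2w i j x t)) /\
    partial_t w x t (wt x t) /\
    cont_xt w x t /\ (forall i, cont_xt (Dw i) x t) /\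
    (forall i j, cont_xt (D2w i j) x t) /\ cont_xt wt x t /\
    H (fun i => Dw i x t)
      (fun i j => D2w i j x t + Z (w x t) * Dw i x t * Dw j x t) + chi t - wt x t <= 0.

(* With d = x - z and c = b (1 + t) e^(|d|^2/Ebar), one has Dw = (2c/Ebar) d and
   D^2 w + Z(w) Dw (x) Dw = (2c/Ebar) (lam e (x) e + I) for the unit vector e = d/|d| and
   lam = (2/Ebar) (1 + Z(w) c) |d|^2.  By the homogeneity of H (Condition B, k1 = 0),
   H(D^2 w + Z(w) Dw (x) Dw) = (2c/Ebar) H(e, lam e (x) e + I) <= (2c/Ebar) Lambda^sup,
   and the choice of Ebar makes this at most b e^(|d|^2/Ebar) (1 + t)/(1 + T) <= w_t - alpha,
   while chi <= alpha.  Using Lambda^sup as a bound requires the maximum over the unit sphere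
   in Condition C to be attained, which holds since H is continuous and the sphere compact. *)
From mathcomp Require Import ssreflect ssrfun ssrbool eqtype ssrnat seq fintype bigop.
From Stdlib Require Import Reals Lra Psatz FunctionalExtensionality.
From HB Require Import structures.
From Coquelicot Require Coquelicot.
From mathcomp Require all_boot all_order all_algebra all_classical all_reals all_analysis.
From mathcomp Require Rstruct Rstruct_topology.
Set Implicit Arguments. Unset Strict Implicit.
Open Scope R_scope.

HB.instance Definition _ :=
  Monoid.isComLaw.Build R 0 Rplus (fun a b c => esym (Rplus_assoc a b c)) Rplus_comm Rplus_0_l.

Section FiniteSums.
Variable n : nat.
Implicit Types (f : 'I_n -> R) (v : vec n).

Lemma rsum_ge0 f : (forall i, 0 <= f i) -> 0 <= rsum f.
Proof. by move=> f_ge0; apply: big_ind => [|u w u0 w0|j _]; [lra | lra | exact: f_ge0]. Qed.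

Lemma rsum_ge_term f i : (forall j, 0 <= f j) -> f i <= rsum f.
Proof.
move=> f_ge0; rewrite /rsum (bigD1 i) //= -[X in X <= _]Rplus_0_r.
apply: Rplus_le_compat_l.
by apply: big_ind => [|u w u0 w0|j _]; [lra | lra | exact: f_ge0].
Qed.

Lemma rsum_D1 f i : rsum f = f i + \big[Rplus/0]_(j < n | j != i) f j.
Proof. exact: bigD1. Qed.

Lemma rsum_mull a f : rsum (fun i => a * f i) = a * rsum f.
Proof. by apply: esym; apply: (big_morph (fun s => a * s)) => [u w|]; ring. Qed.

Lemma vnorm_ge_coord v i : Rabs (v i) <= vnorm v.
Proof.
rewrite -sqrt_Rsqr_abs /vnorm; apply: sqrt_le_1_alt.
have -> : Rsqr (v i) = v i ^ 2 by rewrite /Rsqr; ring.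
by apply: (@rsum_ge_term (fun j => v j ^ 2)) => j; apply: pow2_ge_0.
Qed.

Lemma vnorm_eq0 v : vnorm v = 0 -> forall i, v i = 0.
Proof.
move=> v0 i; have := vnorm_ge_coord v i; rewrite v0.
have := Rle_abs (v i); have := Rle_abs (- v i); rewrite Rabs_Ropp; lra.
Qed.

End FiniteSums.

Section UnitVectors.
Variable n : nat.
Implicit Types (v : vec n).

Lemma vnorm_ge0 v : 0 <= vnorm v.
Proof. exact: sqrt_pos. Qed.

Lemma vnorm_scale a v : vnorm (vscale a v) = Rabs a * vnorm v.
Proof.
rewrite /vnorm /vscale -sqrt_Rsqr_abs -sqrt_mult_alt; last exact: Rle_0_sqr.
congr sqrt; rewrite -rsum_mull; apply: eq_bigr => i _; rewrite /Rsqr; ring.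
Qed.

Lemma normalize_vec v : vnorm v <> 0 -> vnorm (vscale (/ vnorm v) v) = 1.
Proof.
move=> v0; rewrite vnorm_scale Rabs_pos_eq ?Rinv_l //.
by apply: Rlt_le; apply: Rinv_0_lt_compat; have := vnorm_ge0 v; lra.
Qed.

Lemma exists_unit_vec : (0 < n)%nat -> exists e : vec n, vnorm e = 1.
Proof.
move=> n_gt0; pose one : vec n := fun _ => 1.
exists (vscale (/ vnorm one) one); apply: normalize_vec.
by have := vnorm_ge_coord one (Ordinal n_gt0); rewrite Rabs_R1; lra.
Qed.

Lemma vec_polar v : (0 < n)%nat -> exists e, vnorm e = 1 /\ v = vscale (vnorm v) e.
Proof.
move=> n_gt0; have [v0|v_neq0] := Req_dec (vnorm v) 0.
  have [e e1] := exists_unit_vec n_gt0; exists e; split => //.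
  by apply: functional_extensionality => i; rewrite /vscale v0 Rmult_0_l vnorm_eq0.
exists (vscale (/ vnorm v) v); split; first exact: normalize_vec.
by apply: functional_extensionality => i; rewrite /vscale; field.
Qed.

End UnitVectors.

Section JointContinuity.
Import Coquelicot.Coquelicot.

Lemma filter_forall_fin (T : Type) (F : (T -> Prop) -> Prop) {FF : Filter F}
    (I : finType) (P : I -> T -> Prop) :
  (forall k, F (P k)) -> F (fun x => forall k, P k x).
Proof.
move=> FP; suff Fr : forall r : seq I, F (fun x => forall k, k \in r -> P k x).
  by apply: filter_imp (Fr (index_enum I)) => x Px k; apply: Px; rewrite mem_index_enum.
elim=> [|k r IHr]; first by apply: filter_forall.
apply: filter_imp (filter_and _ _ (FP k) IHr) => x [Pkx Prx] k'.
by rewrite inE => /orP [/eqP ->|/Prx].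
Qed.

Variable n : nat.
Implicit Types (f g : vec n -> R -> R) (x : vec n) (t : R).

Lemma cont_xt_filterlim f x t :
  cont_xt f x t <->
  filterlim (fun p : vec n * R => f p.1 p.2) (locally (x, t)) (locally (f x t)).
Proof.
rewrite (filterlim_locally (F := locally (x, t))); split.
- move=> f_cont eps; have [d [d_gt0 Hd]] := f_cont eps (cond_pos eps).
  by exists (mkposreal d d_gt0) => -[y s] [/= Hy Hs]; apply: Hd.
- move=> f_lim eps eps_gt0; have [d Hd] := f_lim (mkposreal eps eps_gt0).
  by exists d; split => [|y s Hy Hs]; [exact: cond_pos | exact: (Hd (y, s))].
Qed.

Lemma cont_xt_const c x t : cont_xt (fun _ _ => c) x t.
Proof. by move=> eps eps_gt0; exists 1; split => [|y s _ _]; rewrite ?Rminus_eq_0 ?Rabs_R0; lra. Qed.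

Lemma cont_xt_time x t : cont_xt (fun _ s => s) x t.
Proof. by move=> eps eps_gt0; exists eps. Qed.

Lemma cont_xt_coord i x t : cont_xt (fun y _ => y i) x t.
Proof. by move=> eps eps_gt0; exists eps; split => // y s Hy _; apply: Hy. Qed.

Lemma cont_xt_plus f g x t :
  cont_xt f x t -> cont_xt g x t -> cont_xt (fun y s => f y s + g y s) x t.
Proof.
rewrite !cont_xt_filterlim => f_lim g_lim.
exact: (filterlim_comp_2 (F := locally (x, t)) _ _ Rplus f_lim g_lim
          (filterlim_plus (f x t) (g x t))).
Qed.

Lemma cont_xt_mult f g x t :
  cont_xt f x t -> cont_xt g x t -> cont_xt (fun y s => f y s * g y s) x t.
Proof.
rewrite !cont_xt_filterlim => f_lim g_lim.
exact: (filterlim_comp_2 (F := locally (x, t)) _ _ Rmult f_lim g_lim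
          (filterlim_mult (f x t) (g x t))).
Qed.

Lemma cont_xt_comp (h : R -> R) f x t :
  continuity_pt h (f x t) -> cont_xt f x t -> cont_xt (fun y s => h (f y s)) x t.
Proof.
rewrite continuity_pt_filterlim !cont_xt_filterlim => h_lim f_lim.
exact: filterlim_comp f_lim h_lim.
Qed.

Lemma cont_xt_pow f k x t : cont_xt f x t -> cont_xt (fun y s => f y s ^ k) x t.
Proof.
apply: (cont_xt_comp (h := fun a => a ^ k)).
exact: derivable_continuous_pt (derivable_pt_pow k _).
Qed.

Lemma cont_xt_exp f x t : cont_xt f x t -> cont_xt (fun y s => exp (f y s)) x t.
Proof. apply: (cont_xt_comp (h := exp)); exact: derivable_continuous_pt (derivable_pt_exp _). Qed.

Lemma cont_xt_ext f g x t :
  (forall y s, f y s = g y s) -> cont_xt f x t -> cont_xt g x t.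
Proof.
by move=> fg f_cont eps /f_cont [d [d_gt0 Hd]]; exists d; split => // y s; rewrite -!fg; apply: Hd.
Qed.

Lemma cont_xt_rsum m (F : 'I_m -> vec n -> R -> R) x t :
  (forall k, cont_xt (F k) x t) -> cont_xt (fun y s => rsum (fun k => F k y s)) x t.
Proof.
move=> F_cont; rewrite /rsum; elim: (index_enum _) => [|k r IHr].
  by apply: (cont_xt_ext _ (cont_xt_const 0 x t)) => y s; rewrite big_nil.
by apply: (cont_xt_ext _ (cont_xt_plus (F_cont k) IHr)) => y s; rewrite big_cons.
Qed.

Lemma cont_xt_uniform_fin (I : finType) (g : I -> vec n -> R -> R) x t eps :
  (forall k, cont_xt (g k) x t) -> 0 < eps ->
  exists d, 0 < d /\ forall y s, (forall i, Rabs (y i - x i) < d) -> Rabs (s - t) < d ->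
    forall k, Rabs (g k y s - g k x t) < eps.
Proof.
move=> g_cont eps_gt0.
pose P k (p : vec n * R) := Rabs (g k p.1 p.2 - g k x t) < eps.
have : locally (x, t) (fun p => forall k, P k p).
  apply: (filter_forall_fin (FF := filter_filter (ProperFilter := locally_filter (x, t)))) => k.
  have /(filterlim_locally (F := locally (x, t))) := proj1 (cont_xt_filterlim _ _ _) (g_cont k).
  by move=> /(_ (mkposreal eps eps_gt0)).
by case=> d Hd; exists d; split => [|y s Hy Hs]; [exact: cond_pos | exact: (Hd (y, s))].
Qed.

End JointContinuity.

Create HintDb cont_xt.
#[export] Hint Resolve cont_xt_const cont_xt_time cont_xt_coord cont_xt_plus cont_xt_mult
  cont_xt_pow cont_xt_exp : cont_xt.

Lemma cont_xt_dist2 n (z x : vec n) t : cont_xt (fun y _ => dist2 y z) x t.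
Proof. by apply: cont_xt_rsum => k; rewrite /Rminus; auto with cont_xt. Qed.

#[export] Hint Resolve cont_xt_dist2 : cont_xt.

Lemma cont_xt_vnorm n (x : vec n) t : cont_xt (fun y _ => vnorm y) x t.
Proof.
apply: (cont_xt_comp (h := sqrt)).
  by apply: continuity_pt_sqrt; apply: rsum_ge0 => i; apply: pow2_ge_0.
by apply: cont_xt_rsum => k; auto with cont_xt.
Qed.

Section UnitSphereArgmax.
Import all_boot all_order all_algebra all_classical all_reals all_analysis.
Import Rstruct Rstruct_topology Order.TTheory GRing.Theory Num.Theory.
Local Open Scope classical_set_scope.
Variable n : nat.

Let coords (v : 'rV[R]_n) : vec n := fun i => v ord0 i.

Let coords_row (e : vec n) : coords (\row_i e i)%R = e.
Proof. by apply: functional_extensionality => i; rewrite /coords mxE. Qed.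

Lemma cvg_rV_of_cont_xt (F : vec n -> R) (v : 'rV[R]_n) :
  cont_xt (fun y (_ : R) => F y) (coords v) 0 -> F (coords x) @[x --> v] --> F (coords v).
Proof.
move=> F_cont; apply/(@cvgrPdist_lt _ R^o _ (nbhs v) _ (fun x => F (coords x))) => e /RltP e_gt0.
have [d [/RltP d_gt0 Hd]] := F_cont e e_gt0.
apply: filterS (near_ball v d d_gt0) => v' [_ v'_near].
rewrite -RabsE Rabs_minus_sym; apply/RltP.
apply: (Hd _ 0); last by rewrite Rminus_eq_0 Rabs_R0; apply/RltP.
by move=> i; have /RltP := v'_near ord0 i; rewrite /ball /= -RabsE Rabs_minus_sym.
Qed.

(* For a function of [y] alone, [cont_xt] at any time is continuity on R^n. *)
Lemma unit_sphere_argmax (F : vec n -> R) : (0 < n)%nat ->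
  (forall v, cont_xt (fun y (_ : R) => F y) v 0) ->
  exists c, vnorm c = 1 /\ forall e, vnorm e = 1 -> F e <= F c.
Proof.
move=> n_gt0 F_cont.
pose S := [set v : 'rV[R]_n | forall i, `[-1, 1] (v ord0 i)] `&` [set v | vnorm (coords v) = 1].
have S_compact : compact S.
  apply: compact_closedI.
    by apply: (@rV_compact _ _ (fun _ => `[-1, 1])) => i; apply: segment_compact.
  apply: (@closed_comp _ _ _ [set 1]); last exact: closed_eq.
  by move=> v _; apply: cvg_rV_of_cont_xt; apply: cont_xt_vnorm.
have in_S e : vnorm e = 1 -> (\row_i e i)%R \in S.
  move=> e1; apply/mem_set; split=> [i|] /=; last by rewrite coords_row.
  have := vnorm_ge_coord e i; rewrite e1 => abs_le1.
  have := Rle_abs (e i); have := Rle_abs (- e i); rewrite Rabs_Ropp => ? ?.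
  by rewrite mxE in_itv /=; apply/andP; split; apply/RleP; rewrite -?R1E; lra.
have [e1 e1_unit] := exists_unit_vec n_gt0.
have [c /set_mem [_ c_unit] c_max] :=
  @EVT_max_rV _ _ (fun v => F (coords v)) _ (ex_intro _ _ (set_mem (in_S _ e1_unit))) S_compact
    (continuous_subspaceT (fun v => cvg_rV_of_cont_xt (F_cont _))).
exists (coords c); split => // e /in_S /c_max /RleP.
by rewrite coords_row.
Qed.

End UnitSphereArgmax.

Definition outer_plus_id n (lam : R) (e : vec n) : mat n := madd (mscale lam (outer e e)) (@idm n).

Lemma sym_outer_plus_id n lam (e : vec n) : sym (outer_plus_id lam e).
Proof.
by move=> i j; rewrite /outer_plus_id /madd /mscale /outer /idm (eq_sym i) (Rmult_comm (e i)).
Qed.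

Lemma sym_mscale n a (X : mat n) : sym X -> sym (mscale a X).
Proof. by move=> X_sym i j; rewrite /mscale X_sym. Qed.

Section HamiltonianBounds.
Variables (n : nat) (H : vec n -> mat n -> R).

Lemma cont_xt_H_comp (G : vec n -> mat n) x t : H_continuous H ->
  (forall v, sym (G v)) -> (forall i j, cont_xt (fun y (_ : R) => G y i j) x t) ->
  cont_xt (fun y (_ : R) => H y (G y)) x t.
Proof.
move=> H_cont G_sym G_cont eps eps_gt0.
have [d [d_gt0 Hd]] := H_cont x (G x) (G_sym x) eps eps_gt0.
have [d' [d'_gt0 Hd']] :=
  @cont_xt_uniform_fin _ _ (fun ij y (_ : R) => G y ij.1 ij.2) x t d (fun ij => G_cont _ _) d_gt0.
exists (Rmin d d'); split => [|y s Hy Hs]; first exact: Rmin_pos.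
apply: Hd => [|i|i j]; first exact: G_sym.
  exact: Rlt_le_trans (Hy i) (Rmin_l _ _).
apply: (Hd' y s _ _ (i, j)) => [k|]; first exact: Rlt_le_trans (Hy k) (Rmin_r _ _).
exact: Rlt_le_trans Hs (Rmin_r _ _).
Qed.

Lemma H_outer_plus_id_le Lsup lam (e : vec n) : (0 < n)%nat ->
  H_continuous H -> condC H Lsup -> vnorm e = 1 -> H e (outer_plus_id lam e) <= Lsup.
Proof.
move=> n_gt0 H_cont [_ [_ [Lsup_ub _]]] e_unit.
have [c [c_unit c_max]] := @unit_sphere_argmax n (fun v => H v (outer_plus_id lam v)) n_gt0
  (fun v => cont_xt_H_comp (x := v) (t := 0) H_cont (@sym_outer_plus_id n lam)
     (fun i j => ltac:(rewrite /outer_plus_id /madd /mscale /outer; auto with cont_xt))).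
apply: Rle_trans (c_max e e_unit) (Lsup_ub _ _).
by exists lam; split => [|y [e' [e'_unit ->]]]; [exists c | apply: c_max].
Qed.

Lemma H_rank_one_le L theta a k (d : vec n) : (0 < n)%nat -> condB0 H ->
  (forall lam e, vnorm e = 1 -> H e (outer_plus_id lam e) <= L) -> 0 < k ->
  H (vscale theta d) (madd (mscale a (outer d d)) (mscale k (@idm n))) <= k * L.
Proof.
move=> n_gt0 [H_scale_q H_scale_X] H_le k_gt0.
have [e [e_unit ->]] := vec_polar d n_gt0; move: (vnorm d) => N.
have -> : vscale theta (vscale N e) = vscale (theta * N) e.
  by apply: functional_extensionality => i; rewrite /vscale; ring.
have -> : madd (mscale a (outer (vscale N e) (vscale N e))) (mscale k (@idm n)) =
          mscale k (outer_plus_id (a * N ^ 2 / k) e).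
  apply: functional_extensionality => i; apply: functional_extensionality => j.
  by rewrite /outer_plus_id /madd /mscale /outer /vscale; field; lra.
rewrite H_scale_q ?H_scale_X //; try exact: sym_outer_plus_id.
  by apply: Rmult_le_compat_l; [lra | apply: H_le].
by apply: sym_mscale; apply: sym_outer_plus_id.
Qed.

End HamiltonianBounds.

Section CoordinateUpdate.
Variables (n : nat) (z : vec n).

Lemma upd_same (x : vec n) i s : upd x i s i = s.
Proof. by rewrite /upd eqxx. Qed.

Lemma upd_other (x : vec n) i j s : j != i -> upd x i s j = x j.
Proof. by rewrite /upd => /negbTE ->. Qed.

Lemma dist2_upd (x : vec n) i s :
  dist2 (upd x i s) z = (s - z i) ^ 2 + (dist2 x z - (x i - z i) ^ 2).
Proof.
rewrite /dist2 (rsum_D1 _ i) [in RHS](rsum_D1 _ i) upd_same.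
have -> : \big[Rplus/0]_(j < n | j != i) (upd x i s j - z j) ^ 2 =
          \big[Rplus/0]_(j < n | j != i) (x j - z j) ^ 2.
  by apply: eq_bigr => j /upd_other ->.
ring.
Qed.

End CoordinateUpdate.

Section Barrier.
Import Coquelicot.Coquelicot.
Variables (n : nat) (z : vec n) (alpha b E : R).

Definition barrier (y : vec n) (s : R) := alpha * s + b * (1 + s) * exp (dist2 y z / E).
Definition barrier_dx (i : 'I_n) (y : vec n) (s : R) :=
  b * (1 + s) * exp (dist2 y z / E) * (2 * (y i - z i) / E).
Definition barrier_dxx (i j : 'I_n) (y : vec n) (s : R) :=
  barrier_dx i y s * (2 * (y j - z j) / E) +
  (if i == j then b * (1 + s) * exp (dist2 y z / E) * (2 / E) else 0).
Definition barrier_dt (y : vec n) (s : R) := alpha + b * exp (dist2 y z / E).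

Lemma barrier_partial_x x t i : partial_x barrier i x t (barrier_dx i x t).
Proof.
rewrite /partial_x /barrier_dx; apply/is_derive_Reals.
rewrite (_ : dist2 x z = (x i - z i) ^ 2 + (dist2 x z - (x i - z i) ^ 2)); last by ring.
move: (dist2 x z - _) (dist2_upd z x i) => K dist2_upd_i.
apply: (is_derive_ext (fun s => alpha * t + b * (1 + t) * exp (((s - z i) ^ 2 + K) / E))).
  by move=> s; rewrite /barrier dist2_upd_i.
by auto_derive; [|rewrite /Rminus /Rdiv /=; ring].
Qed.

Lemma barrier_dx_partial_x x t i j : partial_x (barrier_dx i) j x t (barrier_dxx i j x t).
Proof.
rewrite /partial_x /barrier_dxx /barrier_dx; apply/is_derive_Reals.
rewrite (_ : dist2 x z = (x j - z j) ^ 2 + (dist2 x z - (x j - z j) ^ 2)); last by ring.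
move: (dist2 x z - _) (dist2_upd z x j) => K dist2_upd_j.
case: (eqVneq i j) dist2_upd_j => [<-|ij] dist2_upd_j.
  apply: (is_derive_ext (fun s => b * (1 + t) * exp (((s - z i) ^ 2 + K) / E) * (2 * (s - z i) / E))).
    by move=> s; rewrite dist2_upd_j upd_same.
  by auto_derive; [|rewrite /Rminus /Rdiv /=; ring].
apply: (is_derive_ext (fun s => b * (1 + t) * exp (((s - z j) ^ 2 + K) / E) * (2 * (x i - z i) / E))).
  by move=> s; rewrite dist2_upd_j upd_other.
by auto_derive; [|rewrite /Rminus /Rdiv /=; ring].
Qed.

Lemma barrier_partial_t x t : partial_t barrier x t (barrier_dt x t).
Proof. by apply/is_derive_Reals; rewrite /barrier /barrier_dt; auto_derive; [|ring]. Qed.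

Lemma barrier_hamiltonian_le (H : vec n -> mat n -> R) L zeta x t :
  (0 < n)%nat -> condB0 H -> (forall lam e, vnorm e = 1 -> H e (outer_plus_id lam e) <= L) ->
  0 < b -> 0 < E -> -1 < t ->
  H (fun i => barrier_dx i x t)
    (fun i j => barrier_dxx i j x t + zeta * barrier_dx i x t * barrier_dx j x t)
  <= 2 * (b * (1 + t) * exp (dist2 x z / E)) / E * L.
Proof.
move=> n_gt0 HB H_le b_gt0 E_gt0 t_gt.
set c := b * (1 + t) * exp (dist2 x z / E).
have c_gt0 : 0 < c by apply: Rmult_lt_0_compat; [nra | exact: exp_pos].
pose d : vec n := fun i => x i - z i.
have -> : (fun i => barrier_dx i x t) = vscale (2 * c / E) d.
  by apply: functional_extensionality => i; rewrite /barrier_dx -/c /vscale /d; field; lra.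
have -> : (fun i j => barrier_dxx i j x t + zeta * barrier_dx i x t * barrier_dx j x t) =
          madd (mscale (c * (1 + zeta * c) * (2 / E) ^ 2) (outer d d)) (mscale (2 * c / E) (@idm n)).
  apply: functional_extensionality => i; apply: functional_extensionality => j.
  rewrite /barrier_dxx /barrier_dx -/c /madd /mscale /outer /idm /d.
  by case: (i == j); field; lra.
by apply: H_rank_one_le => //; apply: Rdiv_lt_0_compat; lra.
Qed.

Lemma cont_xt_barrier x t : cont_xt barrier x t.
Proof. by rewrite /barrier /Rdiv; auto with cont_xt. Qed.

Lemma cont_xt_barrier_dx i x t : cont_xt (barrier_dx i) x t.
Proof. by rewrite /barrier_dx /Rdiv /Rminus; auto with cont_xt. Qed.

Lemma cont_xt_barrier_dxx i j x t : cont_xt (barrier_dxx i j) x t.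
Proof.
by rewrite /barrier_dxx /barrier_dx; case: (i == j); rewrite /Rdiv /Rminus; auto 20 with cont_xt.
Qed.

Lemma cont_xt_barrier_dt x t : cont_xt barrier_dt x t.
Proof. by rewrite /barrier_dt /Rdiv; auto with cont_xt. Qed.

End Barrier.

Lemma barrier_time_margin b P t T M L : 0 < b -> 0 < P -> 0 < t < T -> 1 <= M -> L <= M ->
  2 * (b * (1 + t) * P) / (2 * (1 + T) * M) * L <= b * P.
Proof.
move=> b_gt0 P_gt0 t_in M_ge1 L_le.
set k := 2 * (b * (1 + t) * P) / (2 * (1 + T) * M).
have c_gt0 : 0 < b * (1 + t) * P by apply: Rmult_lt_0_compat => //; nra.
have k_ge0 : 0 <= k by apply: Rlt_le; apply: Rdiv_lt_0_compat; nra.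
apply: Rle_trans (Rmult_le_compat_l _ _ _ k_ge0 L_le) _.
apply: (Rmult_le_reg_r (1 + T)); first lra.
have -> : k * M * (1 + T) = b * (1 + t) * P by rewrite /k; field; lra.
have bP_gt0 : 0 < b * P by apply: Rmult_lt_0_compat.
nra.
Qed.

Theorem mainTheorem9 (n : nat) (Hn : (0 < n)%nat)
  (H : vec n -> mat n -> R) (Lsup : R)
  (Hcont : H_continuous H) (HA : condA H) (HB : condB0 H) (HC : condC H Lsup)
  (T : R) (HT : 0 < T)
  (chi : R -> R) (alpha : R)
  (chi_cont : forall t, 0 < t < T -> continuity_pt chi t)
  (chi_bdd : exists B, forall t, 0 < t < T -> Rabs (chi t) <= B)
  (Halpha : is_lub (fun y => exists t, 0 < t < T /\ y = Rabs (chi t)) alpha)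
  (Z : R -> R)
  (Z_nonneg : forall s, 0 <= s -> 0 <= Z s)
  (Z_noninc : forall s1 s2, 0 <= s1 -> s1 <= s2 -> Z s2 <= Z s1)
  (Z_cont : forall s, 0 <= s -> forall eps, 0 < eps -> exists delta, 0 < delta /\
              forall s', 0 <= s' -> Rabs (s' - s) < delta -> Rabs (Z s' - Z s) < eps)
  (z : vec n) (b : R) (Hb : 0 < b) :
  let M := Rmax Lsup 1 in
  let Ebar := 2 * (1 + T) * M in
  classical_supersol H Z chi T
    (fun x t => alpha * t + b * (1 + t) * exp (dist2 x z / Ebar)).
Proof.
move=> M Ebar.
have M_ge1 : 1 <= M := Rmax_r _ _.
have Ebar_gt0 : 0 < Ebar by rewrite /Ebar; nra.
have chi_le t : 0 < t < T -> chi t <= alpha.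
  by move=> t_in; apply: Rle_trans (Rle_abs _) _; apply: (proj1 Halpha); exists t.
change (classical_supersol H Z chi T (barrier z alpha b Ebar)).
exists (barrier_dx z b Ebar), (barrier_dxx z b Ebar), (barrier_dt z alpha b Ebar) => x t t_in.
do 7 (split; first by auto using barrier_partial_x, barrier_dx_partial_x, barrier_partial_t,
  cont_xt_barrier, cont_xt_barrier_dx, cont_xt_barrier_dxx, cont_xt_barrier_dt).
(* Z(w) is absorbed into lam. *)
have H_le := barrier_hamiltonian_le z (Z (barrier z alpha b Ebar x t)) x (t := t) Hn HB
  (fun lam e => @H_outer_plus_id_le n H Lsup lam e Hn Hcont HC) Hb Ebar_gt0 ltac:(lra).
have := barrier_time_margin Hb (exp_pos (dist2 x z / Ebar)) t_in M_ge1 (Rmax_l Lsup 1).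
have := chi_le t t_in; rewrite -/Ebar /barrier_dt; lra.
Qed.
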